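(* If a partial coloring of an $n\times n$ square $A$ uniquely extends to $L(n,2n-2)$, then $A$ has no three uncolored entries in the same row, and no three uncolored entries in the same column.
   Context: For positive integers $n,k$, let $\mathcal{L}_{n,k}$ be the set of $n\times n$ squares all of whose entries are colored with colors from a fixed set of $k$ colors $\{1,\dots,k\}$ such that any two entries in the same row, or in the same column, have different colors. Entries are indexed $(i,j)$, $i$ the row and $j$ the column. A partial coloring of an $n\times n$ square assigns colors from $\{1,\dots,k\}$ to some of its entries; the remaining entries are called uncolored. A partial coloring extends to $L(n,k)$ if the uncolored entries can be colored so that the resulting fully colored square lies in $\mathcal{L}_{n,k}$ (keeping the given colors), and it uniquely extends to $L(n,k)$ if there is exactly one such way. *)

From mathcomp Require Import all_boot.
Set Implicit Arguments. Unset Strict Implicit. Unset Printing Implicit Defensive.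

(* A fully colored n x n square with colors in 'I_k (colors {1..k} shifted to {0..k-1}). *)
Definition square (n k : nat) := {ffun 'I_n * 'I_n -> 'I_k}.
(* A partial coloring: None = uncolored. *)
Definition pcoloring (n k : nat) := {ffun 'I_n * 'I_n -> option 'I_k}.

Definition in_L (n k : nat) (L : square n k) : Prop :=
  (forall i j j', j != j' -> L (i, j) != L (i, j')) /\
  (forall i i' j, i != i' -> L (i, j) != L (i', j)).

Definition extends (n k : nat) (A : pcoloring n k) (L : square n k) : Prop :=
  forall e c, A e = Some c -> L e = c.

Definition uniquely_extends (n k : nat) (A : pcoloring n k) : Prop :=
  exists L, (in_L L /\ extends A L) /\
            forall L', in_L L' -> extends A L' -> L' = L.

From mathcomp Require Import all_boot zify.
Set Implicit Arguments. Unset Strict Implicit. Unset Printing Implicit Defensive.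

(* Let L be the unique completion and j1, j2, j3 free cells of row i. The
   color of a free cell may be changed to any color missing from the rest of
   its column (n - 1 colors) and from the n - 3 other cells of the row, so
   with 2n - 2 colors each free cell has a second candidate besides its color
   in L.  Three cells with two candidates each always admit a second choice of
   pairwise distinct colors, which yields a second completion.  Columns follow
   by transposition. *)

Lemma another_distinct_triple (T : eqType) (P1 P2 P3 : T -> Prop)
    (c1 c2 c3 d1 d2 d3 : T) :
  uniq [:: c1; c2; c3] -> d1 != c1 -> d2 != c2 -> d3 != c3 ->
  P1 c1 -> P2 c2 -> P3 c3 -> P1 d1 -> P2 d2 -> P3 d3 ->
  exists e1 e2 e3, [/\ P1 e1, P2 e2, P3 e3, uniq [:: e1; e2; e3]
                     & [:: e1; e2; e3] != [:: c1; c2; c3]].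
Proof.
have eqF (x y : T) : x != y -> ((x == y) = false) * ((y == x) = false).
  by move=> /negbTE xy; rewrite [y == x]eq_sym xy.
rewrite /= !inE !negb_or andbT => /andP[/andP[c12 c13] c23] dc1 dc2 dc3.
move=> Pc1 Pc2 Pc3 Pd1 Pd2 Pd3.
have ne := (eqF _ _ c12, eqF _ _ c13, eqF _ _ c23, eqF _ _ dc1, eqF _ _ dc2, eqF _ _ dc3).
have [d1_new | /negPn] := boolP (d1 \notin [:: c2; c3]).
  move: d1_new; rewrite !inE negb_or => /andP[/eqF d1c2 /eqF d1c3].
  by exists d1, c2, c3; split; rewrite //= ?inE ?eqseq_cons ?ne ?d1c2 ?d1c3 ?eqxx.
have [d2_new | /negPn] := boolP (d2 \notin [:: c1; c3]).
  move: d2_new; rewrite !inE negb_or => /andP[/eqF d2c1 /eqF d2c3].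
  by exists c1, d2, c3; split; rewrite //= ?inE ?eqseq_cons ?ne ?d2c1 ?d2c3 ?eqxx.
have [d3_new | /negPn] := boolP (d3 \notin [:: c1; c2]).
  move: d3_new; rewrite !inE negb_or => /andP[/eqF d3c1 /eqF d3c2].
  by exists c1, c2, d3; split; rewrite //= ?inE ?eqseq_cons ?ne ?d3c1 ?d3c2 ?eqxx.
(* Otherwise each [dk] is another [c], so [k |-> dk] permutes a pair or all
   three of the [ck]. *)
rewrite !inE => /orP[]/eqP E3 /orP[]/eqP E2 /orP[]/eqP E1; subst d1 d2 d3;
  [ exists c2, c1, c3 | exists c3, c2, c1 | exists c2, c3, c1 | exists c3, c2, c1
  | exists c2, c1, c3 | exists c3, c1, c2 | exists c1, c3, c2 | exists c1, c3, c2 ];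
  by split; rewrite //= ?inE ?eqseq_cons ?ne ?eqxx.
Qed.

Section RecolorRow.

Variables (n k : nat) (L : square n k) (i : 'I_n) (T : {set 'I_n}).

(* [x] may be written at [(i, j)] when row [i] is recolored on the columns [T]
   and everything else is kept. *)
Definition admissible (j : 'I_n) (x : 'I_k) : Prop :=
  (forall i', i' != i -> x != L (i', j)) /\
  (forall j', j' \notin T -> x != L (i, j')).

Lemma admissible_self j : in_L L -> j \in T -> admissible j (L (i, j)).
Proof.
case=> Lrow Lcol jT; split=> [i' i'i | j' j'T]; first by apply: Lcol; rewrite eq_sym.
by apply: Lrow; apply: contraNneq j'T => <-.
Qed.

(* At most [(n - 1) + (n - #|T|)] colors are forbidden, and [L (i, j)] is one
   of the remaining ones. *)
Lemma exists_other_admissible j :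
  2 * n < k + #|T| -> exists2 x, x != L (i, j) & admissible j x.
Proof.
move=> big.
set F := [set L (i', j) | i' in [set~ i]] :|: [set L (i, j') | j' in ~: T].
have cardF : #|F| <= n.-1 + (n - #|T|).
  apply: (leq_trans (leq_card_setU _ _)); apply: leq_add.
    by apply: (leq_trans (leq_imset_card _ _)); rewrite cardsC1 card_ord.
  apply: (leq_trans (leq_imset_card _ _)).
  by rewrite [#|~: T|]cardsCs setCK card_ord.
have cardC : 1 < #|~: F|.
  have := cardsC F; have := max_card T; rewrite !card_ord; have := ltn_ord i.
  set f := #|F|; set t := #|T|; set c := #|~: F|; lia.
have : 0 < #|~: F :\ L (i, j)|.
  by rewrite (cardsD1 (L (i, j))) in cardC; lia.
case/card_gt0P => x; rewrite !inE negb_or => /and3P[xL xcol xrow].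
exists x => //; split=> [i' i'i | j' j'T].
- by apply: contraNneq xcol => ->; apply: imset_f; rewrite !inE.
- by apply: contraNneq xrow => ->; apply: imset_f; rewrite !inE.
Qed.

Definition recolor_row (g : 'I_n -> 'I_k) : square n k :=
  [ffun e => if e.1 == i then g e.2 else L e].

Variable g : 'I_n -> 'I_k.
Hypothesis g_out : forall j, j \notin T -> g j = L (i, j).

Lemma recolor_row_in_L :
  in_L L -> {in T &, injective g} -> {in T, forall j, admissible j (g j)} ->
  in_L (recolor_row g).
Proof.
case=> Lrow Lcol g_inj g_adm; split=> [i0 j j' jj' | i1 i2 j i12]; rewrite !ffunE /=.
- case: ifP => _; last exact: Lrow.
  have [jT|jT] := boolP (j \in T); have [j'T|j'T] := boolP (j' \in T).
  + by apply: contraNneq jj' => E; rewrite (g_inj j j' jT j'T E).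
  + by rewrite (g_out j'T); case: (g_adm j jT) => _; apply.
  + by rewrite eq_sym (g_out jT); case: (g_adm j' j'T) => _; apply.
  + by rewrite !g_out //; apply: Lrow.
- have col j' i' : i' != i -> g j' != L (i', j').
    move=> i'i; have [j'T|j'T] := boolP (j' \in T); first by case: (g_adm j' j'T) => + _; apply.
    by rewrite g_out //; apply: Lcol; rewrite eq_sym.
  case: (eqVneq i1 i) => [E1 | i1i]; case: (eqVneq i2 i) => [E2 | i2i] //=.
  + by rewrite E1 E2 eqxx in i12.
  + exact: col.
  + by rewrite eq_sym; apply: col.
  + exact: Lcol.
Qed.

Lemma recolor_row_extends (A : pcoloring n k) :
  extends A L -> {in T, forall j, A (i, j) = None} -> extends A (recolor_row g).
Proof.
move=> LA A_free [i' j] c Ac; rewrite ffunE /=; case: eqP => [Ei | _]; last exact: LA.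
subst i'; have [jT | jT] := boolP (j \in T); first by rewrite A_free in Ac.
by rewrite g_out //; apply: LA.
Qed.

Lemma unique_extension_fixes_row (A : pcoloring n k) :
  in_L L -> extends A L -> (forall L', in_L L' -> extends A L' -> L' = L) ->
  {in T &, injective g} -> {in T, forall j, admissible j (g j)} ->
  {in T, forall j, A (i, j) = None} ->
  forall j, g j = L (i, j).
Proof.
move=> LL LA L_unique g_inj g_adm A_free j.
have -> : L = recolor_row g.
  by apply/esym/L_unique; [exact: recolor_row_in_L | exact: recolor_row_extends].
by rewrite ffunE /= eqxx.
Qed.

End RecolorRow.

Section Transpose.

Variables (n : nat) (T : Type).

Definition transpose_grid (M : {ffun 'I_n * 'I_n -> T}) : {ffun 'I_n * 'I_n -> T} :=
  [ffun e => M (e.2, e.1)].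

Lemma transpose_gridK : involutive transpose_grid.
Proof. by move=> M; apply/ffunP => -[a b]; rewrite !ffunE. Qed.

End Transpose.

Lemma in_L_transpose n k (L : square n k) : in_L L -> in_L (transpose_grid L).
Proof. by case=> Lrow Lcol; split=> *; rewrite !ffunE /=; [apply: Lcol | apply: Lrow]. Qed.

Lemma extends_transpose n k (A : pcoloring n k) (L : square n k) :
  extends A L -> extends (transpose_grid A) (transpose_grid L).
Proof. by move=> LA [a b] c; rewrite !ffunE /=; apply: LA. Qed.

Lemma uniquely_extends_transpose n k (A : pcoloring n k) :
  uniquely_extends A -> uniquely_extends (transpose_grid A).
Proof.
case=> L [[LL LA] L_unique]; exists (transpose_grid L).
split; first by split; [apply: in_L_transpose | apply: extends_transpose].
move=> L' LL' AL'; rewrite -(transpose_gridK L'); congr transpose_grid.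
apply: L_unique; first exact: in_L_transpose.
by rewrite -[A]transpose_gridK; apply: extends_transpose.
Qed.

Lemma row_has_no_three_free_cells n (A : pcoloring n (2 * n - 2)) (i j1 j2 j3 : 'I_n) :
  uniquely_extends A -> j1 != j2 -> j1 != j3 -> j2 != j3 ->
  A (i, j1) = None -> A (i, j2) = None -> A (i, j3) = None -> False.
Proof.
case=> L [[LL LA] L_unique] j12 j13 j23 A1 A2 A3.
pose js := [:: j1; j2; j3]; pose T := [set j in js].
have js_uniq : uniq js by rewrite /= !inE negb_or j12 j13 j23.
have inT j : j \in T -> [\/ j = j1, j = j2 | j = j3].
  by rewrite !inE => /or3P[]/eqP->; [constructor 1 | constructor 2 | constructor 3].
have big : 2 * n < 2 * n - 2 + #|T|.
  by rewrite cardsE (card_uniqP js_uniq) /=; lia.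
have [T1 T2 T3] : [/\ j1 \in T, j2 \in T & j3 \in T] by rewrite !inE !eqxx !orbT.
have [d1 d1L d1_adm] := exists_other_admissible L i j1 big.
have [d2 d2L d2_adm] := exists_other_admissible L i j2 big.
have [d3 d3L d3_adm] := exists_other_admissible L i j3 big.
have cs_uniq : uniq [:: L (i, j1); L (i, j2); L (i, j3)].
  by case: LL => Lrow _; rewrite /= !inE negb_or !Lrow.
have [e1 [e2 [e3 [e1_adm e2_adm e3_adm es_uniq es_new]]]] :=
  another_distinct_triple cs_uniq d1L d2L d3L
    (admissible_self i LL T1) (admissible_self i LL T2) (admissible_self i LL T3)
    d1_adm d2_adm d3_adm.
pose g j := nth (L (i, j)) [:: e1; e2; e3] (index j js).
have g_out j : j \notin T -> g j = L (i, j).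
  by rewrite inE => jT; rewrite /g nth_default // memNindex.
have [g1 g2 g3] : [/\ g j1 = e1, g j2 = e2 & g j3 = e3].
  by rewrite /g /= !eqxx (negbTE j12) (negbTE j13) (negbTE j23).
have g_inj : {in T &, injective g}.
  have idx j : j \in T -> index j js < size [:: e1; e2; e3] by rewrite inE -index_mem.
  move=> j j' jT j'T; rewrite /g (set_nth_default e1) ?idx // (set_nth_default e1 _ (idx _ j'T)).
  move/eqP; rewrite nth_uniq ?idx // => /eqP.
  by apply: (index_inj j); [move: jT | move: j'T]; rewrite inE.
have g_adm : {in T, forall j, admissible L i T j (g j)}.
  by move=> j /inT[]->; rewrite ?g1 ?g2 ?g3.
have A_free : {in T, forall j, A (i, j) = None} by move=> j /inT[]->.
have gL := unique_extension_fixes_row g_out LL LA L_unique g_inj g_adm A_free.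
by move: es_new; rewrite -g1 -g2 -g3 !gL eqxx.
Qed.

Theorem lemma1 (n : nat) (A : pcoloring n (2 * n - 2)) :
  0 < n ->
  uniquely_extends A ->
  (forall i : 'I_n, ~ exists j1 j2 j3 : 'I_n,
      [/\ j1 != j2, j1 != j3, j2 != j3 &
          [/\ A (i, j1) = None, A (i, j2) = None & A (i, j3) = None]]) /\
  (forall j : 'I_n, ~ exists i1 i2 i3 : 'I_n,
      [/\ i1 != i2, i1 != i3, i2 != i3 &
          [/\ A (i1, j) = None, A (i2, j) = None & A (i3, j) = None]]).
Proof.
move=> _ uA; split.
- move=> i [j1 [j2 [j3 [j12 j13 j23 [A1 A2 A3]]]]].
  exact: row_has_no_three_free_cells uA j12 j13 j23 A1 A2 A3.
- move=> j [i1 [i2 [i3 [i12 i13 i23 [A1 A2 A3]]]]].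
  apply: (row_has_no_three_free_cells (uniquely_extends_transpose uA) (i := j) i12 i13 i23);
    by rewrite ffunE.
Qed.
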